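(* Let $C$ be a compact Lie group, let $W$ be a finite-dimensional real $C$-module and let $w\in W$ be such that the orbit $Cw$ spans $W$. Then $L:=\{g\in\operatorname{GL}(W)\mid gCw=Cw\}$ is compact. *)

From HB Require Import structures.
From mathcomp Require Import all_boot all_order all_algebra.
From mathcomp Require Import all_classical all_reals all_analysis.
Set Implicit Arguments. Unset Strict Implicit. Unset Printing Implicit Defensive.
Import Order.TTheory GRing.Theory Num.Theory.
Import numFieldNormedType.Exports.
Local Open Scope ring_scope.
Local Open Scope classical_set_scope.

Definition compact_topological_group (C : topologicalType)
  (mul : C -> C -> C) (one : C) (inv : C -> C) : Prop :=
  (forall a b c, mul a (mul b c) = mul (mul a b) c) /\
  (forall a, mul one a = a /\ mul a one = a) /\
  (forall a, mul (inv a) a = one /\ mul a (inv a) = one) /\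
  continuous (fun p : C * C => mul p.1 p.2) /\
  continuous inv /\
  compact [set: C].

(* rho : C -> GL_n(R) is a continuous representation of C on W = R^n
   (column vectors, left action v |-> rho c *m v). *)
Definition continuous_rep (R : realType) (n : nat) (C : topologicalType)
  (mul : C -> C -> C) (one : C) (rho : C -> 'M[R]_(n, n)) : Prop :=
  [/\ continuous rho,
      rho one = 1%:M &
      (forall a b, rho (mul a b) = rho a *m rho b)].

Definition orbit_set (R : realType) (n : nat) (C : Type)
  (rho : C -> 'M[R]_(n, n)) (w : 'cV[R]_n) : set 'cV[R]_n :=
  [set rho c *m w | c in [set: C]].

Definition spans (R : realType) (n : nat) (S : set 'cV[R]_n) : Prop :=
  forall v : 'cV[R]_n, exists (k : nat) (coef : 'I_k -> R) (x : 'I_k -> 'cV[R]_n),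
    (forall i, S (x i)) /\ v = \sum_(i < k) coef i *: x i.

Definition stabilizer_GL (R : realType) (n : nat) (O : set 'cV[R]_n)
  : set 'M[R]_(n, n) :=
  [set g | g \in unitmx /\ [set g *m x | x in O] = O].

From HB Require Import structures.
From mathcomp Require Import all_boot all_order all_algebra.
From mathcomp Require Import all_classical all_reals all_analysis.
Import Order.TTheory GRing.Theory Num.Theory.
Import numFieldNormedType.Exports.
Local Open Scope ring_scope.
Local Open Scope classical_set_scope.

(* The orbit O := C w is compact, being a continuous image of C. Every g in L
   maps O into O; as each standard basis vector is a fixed linear combination
   of points of O, the columns of g are bounded uniformly in g. Hence the
   pairs (g, g^-1) with g in L form a closed bounded, thus compact, set of
   pairs of matrices, and L is its image under the first projection. *)

Lemma continuous_fst {U V : topologicalType} : continuous (@fst U V).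
Proof. by move=> p; exact: cvg_fst. Qed.

Lemma continuous_snd {U V : topologicalType} : continuous (@snd U V).
Proof. by move=> p; exact: cvg_snd. Qed.

Lemma continuous_mx_entries {X T : topologicalType} m k (f : X -> 'M[T]_(m, k)) :
  (forall i j, continuous (fun x => f x i j)) -> continuous f.
Proof.
move=> fc x A [P Pn PA]; apply: (filterS (fun y Hy => PA (f y) Hy)).
apply: filter_forall => i; apply: filter_forall => j.
exact: (fc i j x _ (Pn i j)).
Qed.

Section RealMatrices.
Variable R : realType.

Lemma continuous_sum {X : topologicalType} {V : normedModType R} (I : Type)
    (s : seq I) (F : I -> X -> V) :
  (forall i, continuous (F i)) -> continuous (fun x => \sum_(i <- s) F i x).
Proof.
move=> Fc; elim: s => [|a s IH].
  under eq_fun do rewrite big_nil; exact: cst_continuous.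
under eq_fun do rewrite big_cons.
move=> x; exact: (@continuousD _ V _ (F a) (fun x => \sum_(i <- s) F i x) x
  (Fc a x) (IH x)).
Qed.

Lemma continuous_mulmx {X : topologicalType} m k p (F : X -> 'M[R]_(m, k))
    (G : X -> 'M[R]_(k, p)) :
  continuous F -> continuous G -> continuous (fun x => F x *m G x).
Proof.
move=> Fc Gc; apply: continuous_mx_entries => i j.
under eq_fun do rewrite mxE.
apply: (@continuous_sum _ R^o) => l x; apply: continuousM.
  exact: (continuous_comp (Fc x) (@coord_continuous R _ _ i l (F x))).
exact: (continuous_comp (Gc x) (@coord_continuous R _ _ l j (G x))).
Qed.

Lemma mx_entry_le_norm {m k} (M : 'M[R]_(m, k)) i j : `|M i j| <= `|M|.
Proof.
rewrite [leRHS]/Num.norm /= mx_normrE; apply/bigmax_geP; right => /=.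
by exists (i, j).
Qed.

Lemma compact_mx_box m k (b : R) :
  compact [set M : 'M[R]_(m, k) | forall i j, `|M i j| <= b].
Proof.
pose V := [set v : 'rV[R]_(m * k) | forall i, `[-b, b]%classic (v ord0 i)].
have cV : compact V.
  by apply: (@rV_compact _ _ (fun=> `[-b, b]%classic)) => _; exact: segment_compact.
pose unvec (v : 'rV[R]_(m * k)) : 'M[R]_(m, k) := \matrix_(i, j) v ord0 (mxvec_index i j).
have unvec_cont : continuous unvec.
  apply: continuous_mx_entries => i j; under eq_fun do rewrite mxE.
  by move=> v; exact: coord_continuous.
have := continuous_compact (continuous_subspaceT unvec_cont) cV.
congr compact; apply/seteqP; split.
  move=> _ [v Vv <-] i j; rewrite mxE.
  by have := Vv (mxvec_index i j); rewrite /= in_itv /= -ler_norml.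
move=> M HM; exists (mxvec M).
  move=> i; case/mxvec_indexP: i => i j; rewrite mxvecE /= in_itv /= -ler_norml.
  exact: HM.
by apply/matrixP => i j; rewrite mxE mxvecE.
Qed.

Lemma compact_inverse_pairs {n} (P : set 'M[R]_n) :
  closed P -> bounded_set P ->
  compact [set p : 'M[R]_n * 'M[R]_n | p.1 *m p.2 = 1%:M /\ P p.1 /\ P p.2].
Proof.
move=> Pcl [b [_ Pb]].
have Pbox g : P g -> forall i j, `|g i j| <= b + 1.
  by move=> Pg i j; apply: le_trans (mx_entry_le_norm _ _ _) _; apply: Pb; rewrite ?ltrDl.
have inv_pairs_cl : closed [set p : 'M[R]_n * 'M[R]_n | p.1 *m p.2 = 1%:M].
  have cl1 : closed [set (1%:M : 'M[R]_n)].
    exact/accessible_closed_set1/hausdorff_accessible/norm_hausdorff.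
  apply: (proj1 (continuous_closedP _)) cl1.
  exact: continuous_mulmx continuous_fst continuous_snd.
apply: (subclosed_compact _ (compact_setX (compact_mx_box n n (b + 1))
                                           (compact_mx_box n n (b + 1)))).
  apply: closedI inv_pairs_cl (closedI _ _).
    exact: (proj1 (continuous_closedP fst)) continuous_fst _ Pcl.
  exact: (proj1 (continuous_closedP snd)) continuous_snd _ Pcl.
by move=> [g h] [_ [Pg Ph]]; split; apply: Pbox.
Qed.

Definition mx_maps_into {n} (O : set 'cV[R]_n) : set 'M[R]_n :=
  [set g | forall x, O x -> O (g *m x)].

Lemma closed_mx_maps_into {n} (O : set 'cV[R]_n) :
  closed O -> closed (mx_maps_into O).
Proof.
move=> Ocl; have -> : mx_maps_into O = \bigcap_(x in O) [set g | O (g *m x)].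
  by apply/seteqP; split => [g Og x Ox | g Og x Ox]; exact: Og.
apply: closed_bigI => x _.
apply: (proj1 (continuous_closedP (fun g : 'M[R]_n => g *m x))) Ocl.
exact: (@continuous_mulmx _ n n 1 id (fun=> x) (fun _ => cvg_id) (@cst_continuous _ _ x)).
Qed.

Lemma bounded_mx_maps_into {n} (O : set 'cV[R]_n) :
  bounded_set O -> spans O -> bounded_set (mx_maps_into O).
Proof.
move=> [b [_ Ob]] span.
have Ob1 x : O x -> `|x| <= b + 1 by move=> Ox; apply: Ob; rewrite ?ltrDl.
have col_bound j : exists c, forall g, mx_maps_into O g -> forall i, `|g i j| <= c.
  have [k [coef [x [Ox ej]]]] := span (delta_mx j 0).
  exists (\sum_(l < k) `|coef l| * (b + 1)) => g Og i.
  have -> : g i j = (g *m (delta_mx j 0 : 'cV[R]_n)) i 0 by rewrite -colE mxE.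
  rewrite ej mulmx_sumr summxE; apply: le_trans (ler_norm_sum _ _ _) _.
  apply: ler_sum => l _; rewrite -scalemxAr mxE normrM ler_wpM2l //.
  exact: le_trans (mx_entry_le_norm _ _ _) (Ob1 _ (Og _ (Ox l))).
have [c Hc] := fin_all_exists col_bound.
have c_ge0 : 0 <= \sum_j `|c j| by apply: sumr_ge0 => *; exact: normr_ge0.
exists (\sum_j `|c j|); split; first exact: ger0_real.
move=> M cM g Og; apply: le_trans (ltW cM).
rewrite [leLHS]/Num.norm /= mx_normrE; apply/bigmax_leP; split => // [[i j]] _ /=.
apply: le_trans (Hc j g Og i) _; apply: le_trans (ler_norm _) _.
by rewrite (bigD1 j) //= lerDl; apply: sumr_ge0 => *; exact: normr_ge0.
Qed.

Lemma stabilizer_GL_inverse_pairs n (O : set 'cV[R]_n) :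
  stabilizer_GL O = fst @` [set p : 'M[R]_n * 'M[R]_n |
    p.1 *m p.2 = 1%:M /\ mx_maps_into O p.1 /\ mx_maps_into O p.2].
Proof.
apply/seteqP; split.
  move=> g [gu gO]; exists (g, invmx g) => //; split; first by rewrite /= mulmxV.
  split => x Ox /=; first by rewrite -gO; exists x.
  by move: Ox; rewrite -{1}gO => -[y Oy <-]; rewrite mulKmx.
move=> _ [[g h] [/= gh [Og Oh]] <-] /=; split; first by case: (mulmx1_unit gh).
apply/seteqP; split; first by move=> _ [x Ox <-]; exact: Og.
move=> y Oy; exists (h *m y); first exact: Oh.
by rewrite mulmxA gh mul1mx.
Qed.

Lemma compact_stabilizer_GL {n} (O : set 'cV[R]_n) :
  compact O -> spans O -> compact (stabilizer_GL O).
Proof.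
move=> Ocomp span; rewrite stabilizer_GL_inverse_pairs.
apply: continuous_compact; first exact: continuous_subspaceT continuous_fst.
apply: compact_inverse_pairs.
  exact: closed_mx_maps_into (compact_closed (@norm_hausdorff _ _) Ocomp).
exact: bounded_mx_maps_into (compact_bounded Ocomp) span.
Qed.

Lemma compact_orbit_set n (C : topologicalType) (rho : C -> 'M[R]_n)
    (w : 'cV[R]_n) :
  compact [set: C] -> continuous rho -> compact (orbit_set rho w).
Proof.
move=> Ccomp rhoc; apply: continuous_compact Ccomp; apply: continuous_subspaceT.
by apply: continuous_mulmx rhoc _; exact: cst_continuous.
Qed.

End RealMatrices.

Theorem proposition2p2 (R : realType) (n : nat) (C : topologicalType)
  (mul : C -> C -> C) (one : C) (inv : C -> C) (rho : C -> 'M[R]_(n, n))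
  (w : 'cV[R]_n) :
  compact_topological_group mul one inv ->
  continuous_rep mul one rho ->
  spans (orbit_set rho w) ->
  compact (stabilizer_GL (orbit_set rho w)).
Proof.
move=> [_ [_ [_ [_ [_ Ccomp]]]]] [rhoc _ _] span.
by apply: compact_stabilizer_GL span; exact: compact_orbit_set.
Qed.
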